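(* With $T=\mathcal{P}_{\mathsf{ufs}}$, $FX=1+\mathbb{A}\times X+[\mathbb{A}]X$, $GX=2\times X^{\mathbb{A}}\times[\mathbb{A}]X$, let $(\mu F,\iota)=(\overline{\mathbb{A}}^*/{=_\alpha},\iota)$ be the initial $F$-algebra and $(\nu G,\tau)=(\mathcal{P}_{\mathsf{fs}}(\overline{\mathbb{A}}^*/{=_\alpha}),\tau)$ the terminal $G$-coalgebra. Let $e\colon\mathcal{P}_{\mathsf{ufs}}(\overline{\mathbb{A}}^*/{=_\alpha})\to\mathcal{P}_{\mathsf{fs}}(\overline{\mathbb{A}}^*/{=_\alpha})$ be the unique $G$-coalgebra homomorphism from $(\mathcal{P}_{\mathsf{ufs}}(\mu F),(\varepsilon_{\mu F}\cdot J\iota^{-1})^\sharp)$ to $(\nu G,\tau)$. Then $e$ is the inclusion map $\mathcal{P}_{\mathsf{ufs}}(\overline{\mathbb{A}}^*/{=_\alpha})\hookrightarrow\mathcal{P}_{\mathsf{fs}}(\overline{\mathbb{A}}^*/{=_\alpha})$.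
   Context: Fix a countably infinite set $\mathbb{A}$ of names; $\mathsf{Nom}$: nominal sets and equivariant maps; $1=\{*\}$, $2=\{0,1\}$; $[\mathbb{A}]X$ abstraction sets with classes $\langle a\rangle x$; $\mathcal{P}_{\mathsf{fs}}$, $\mathcal{P}_{\mathsf{ufs}}$ the finitely / uniformly finitely supported power sets, unit $\eta$ singleton, multiplication $\mu$ union. Bar strings: words over $\overline{\mathbb{A}}=\mathbb{A}\cup\{\mathord{|}a\}$; $=_\alpha$ the least equivalence with $x\,\mathord{|}a\,v=_\alpha x\,\mathord{|}b\,w$ whenever $\langle a\rangle v=\langle b\rangle w$; classes $[w]_\alpha$. $\iota( * )=[\varepsilon]_\alpha$, $\iota(a,[w]_\alpha)=[aw]_\alpha$, $\iota(\langle a\rangle[w]_\alpha)=[\mathord{|}a\,w]_\alpha$; $J\iota^{-1}=\eta\cdot\iota^{-1}$. $\tau(S)=(b,a\mapsto S_a,S_{\mathord{|}a})$ with $b=1$ iff $[\varepsilon]_\alpha\in S$, $S_a=\{[w]_\alpha:[aw]_\alpha\in S\}$, $S_{\mathord{|}a}=\langle a\rangle\{[w]_\alpha:[\mathord{|}a\,w]_\alpha\in S\}$ for $a$ fresh for $S$. $\varepsilon_X\colon\mathcal{P}_{\mathsf{ufs}}FX\to G\mathcal{P}_{\mathsf{ufs}}X$, $\varepsilon_X(S)=(b,a\mapsto\{s:(a,s)\in S\},\langle a\rangle\{s:\langle a\rangle s\in S\})$ with $b=1$ iff $*\in S$ and $a$ fresh for $S$. For an equivariant $g\colon X\to G\mathcal{P}_{\mathsf{ufs}}Y$,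 $g^\sharp\colon\mathcal{P}_{\mathsf{ufs}}X\to G\mathcal{P}_{\mathsf{ufs}}Y$ is its homomorphic extension w.r.t. the canonical $\mathcal{P}_{\mathsf{ufs}}$-algebra structure $G\mu_Y\cdot\rho_{\mathcal{P}_{\mathsf{ufs}}Y}$ on $G\mathcal{P}_{\mathsf{ufs}}Y$, i.e. $g^\sharp=G\mu_Y\cdot\rho_{\mathcal{P}_{\mathsf{ufs}}Y}\cdot\mathcal{P}_{\mathsf{ufs}}g$; concretely, for $U\in\mathcal{P}_{\mathsf{ufs}}X$ with $g(u)=(b_u,f_u,\langle a\rangle V_u)$ ($a$ fresh for $U$), $g^\sharp(U)=(\max_u b_u,\,a'\mapsto\bigcup_u f_u(a'),\,\langle a\rangle\bigcup_u V_u)$. Here $\rho_X(S)=(b,a\mapsto\{f(a):f\in p_1[S]\},\langle a\rangle\{s:\langle a\rangle s\in p_2[S]\})$ ($b=1$ iff $1\in p_0[S]$, $a$ fresh) is the distributive law of the canonical lifting of $G$. *)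

From Stdlib Require Import List Arith.
Import ListNotations.

Definition name := nat.

(* letters of  Abar = A  \cup { |a : a in A } *)
Inductive letter : Type := Fr (a : name) | Bd (a : name).
Definition word := list letter.

Definition swapn (a b c : name) : name :=
  if Nat.eqb c a then b else if Nat.eqb c b then a else c.

Definition swapl (a b : name) (l : letter) : letter :=
  match l with Fr c => Fr (swapn a b c) | Bd c => Bd (swapn a b c) end.

Definition swapw (a b : name) (w : word) : word := map (swapl a b) w.

Definition lname (l : letter) : name := match l with Fr c => c | Bd c => c end.
Definition names (w : word) : list name := map lname w.

(* b # v for a (raw) bar string: the least support of v is its set of names *)
Definition fresh_word (b : name) (v : word) : Prop := ~ In b (names v).

(* <a>v = <b>w  in  [A](Abar^* ) *)
Definition abs_eq_word (a : name) (v : word) (b : name) (w : word) : Prop :=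
  (a = b /\ v = w) \/ (fresh_word b v /\ swapw a b v = w).

Inductive alpha : word -> word -> Prop :=
| alpha_refl  : forall w, alpha w w
| alpha_sym   : forall w v, alpha w v -> alpha v w
| alpha_trans : forall u v w, alpha u v -> alpha v w -> alpha u w
| alpha_rule  : forall x a v b w, abs_eq_word a v b w ->
                  alpha (x ++ Bd a :: v) (x ++ Bd b :: w).

(* ---------- subsets of muF = Abar^* /=_alpha ----------
   A subset of Abar^* /=_alpha is represented by the =_alpha-saturated
   predicate on bar strings (w in S  iff  [w]_alpha in S). *)
Definition cset := word -> Prop.

Definition saturated (S : cset) : Prop :=
  forall w v, alpha w v -> S w -> S v.

(* pointwise action of the transposition (a b) on a set of classes:
   (a b).S = { (a b).[w] | [w] in S } *)
Definition swapset (a b : name) (S : cset) : cset := fun w => S (swapw a b w).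

Definition supports_set (N : list name) (S : cset) : Prop :=
  forall a b, ~ In a N -> ~ In b N -> swapset a b S = S.

Definition supports_cls (N : list name) (w : word) : Prop :=
  forall a b, ~ In a N -> ~ In b N -> alpha (swapw a b w) w.

Definition fs (S : cset) : Prop := exists N, supports_set N S.
Definition ufs (S : cset) : Prop :=
  exists N, forall w, S w -> supports_cls N w.

Definition fresh_set (b : name) (S : cset) : Prop :=
  exists N, supports_set N S /\ ~ In b N.

Definition inPufs (S : cset) : Prop := saturated S /\ ufs S.
Definition inPfs  (S : cset) : Prop := saturated S /\ fs S.

(* ---------- the functor G X = 2 x X^A x [A]X on X = sets of classes ----------
   2 is represented by Prop; an element <a>S of [A]X by the pair (a,S),
   compared with the abstraction equality abs_eq. *)
Definition Gobj : Type := (Prop * (name -> cset) * (name * cset))%type.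

Definition abs_eq (a : name) (S : cset) (b : name) (T : cset) : Prop :=
  (a = b /\ S = T) \/ (fresh_set b S /\ swapset a b S = T).

Definition Geq (x y : Gobj) : Prop :=
  match x, y with
  | (b1, f1, (a1, X1)), (b2, f2, (a2, X2)) =>
      b1 = b2 /\ (forall a, f1 a = f2 a) /\ abs_eq a1 X1 a2 X2
  end.

Definition Gmap (e : cset -> cset) (x : Gobj) : Gobj :=
  match x with (b, f, (a, X)) => (b, fun c => e (f c), (a, e X)) end.

(* tau(S), computed with the fresh name a (a # S) *)
Definition tau_at (a : name) (S : cset) : Gobj :=
  ( S [],
    fun c => (fun v => S (Fr c :: v)),
    (a, fun v => S (Bd a :: v)) ).

(* g = eps_{muF} . J iota^{-1} : muF -> G P_ufs(muF), unfolded at u = [w]: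
     b_u      = 1  iff  iota( * ) = u             i.e. [eps] = [w]
     f_u(c)   = { s | iota(c,s) = u }            = { [v] | [c v] = [w] }
     V_u      = { s | iota(<a>s) = u }  (a fresh)= { [v] | [|a v] = [w] }
   and its homomorphic extension
     g^#(U) = (max_{u in U} b_u, c |-> U_{u in U} f_u(c), <a> U_{u in U} V_u)
   for a fresh for U. *)
Definition c_at (a : name) (U : cset) : Gobj :=
  ( exists w, U w /\ alpha [] w,
    fun c => (fun v => exists w, U w /\ alpha (Fr c :: v) w),
    (a, fun v => exists w, U w /\ alpha (Bd a :: v) w) ).

(* e is a G-coalgebra homomorphism (in Nom, i.e. equivariant) from
   (P_ufs(muF), (eps . J iota^{-1})^#) to (P_fs(muF), tau) *)
Definition is_hom (e : cset -> cset) : Prop :=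
  (forall U, inPufs U -> inPfs (e U)) /\
  (forall a b U, inPufs U -> e (swapset a b U) = swapset a b (e U)) /\
  (forall U a a', inPufs U -> fresh_set a U -> fresh_set a' (e U) ->
      Geq (Gmap e (c_at a U)) (tau_at a' (e U))).

(* On an =_alpha-saturated set U, the structure map (eps . J iota^-1)^# computes
   exactly tau(U): its components are U's derivatives by the letters a and |a.
   Since tau does not depend on the fresh name used, the inclusion is a
   homomorphism.  Conversely, a homomorphism e commutes with the derivatives by
   every letter a and by |a for a fresh, and agrees with the identity on the
   empty word.  Every
   bar string is alpha-equivalent to one whose leading bound name is fresh, and
   derivatives of uniformly finitely supported sets are again such, so induction
   on the length of words gives e U = U. *)
From Stdlib Require Import List Arith Lia FunctionalExtensionality PropExtensionality.
Import ListNotations.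

Ltac swapn_cases :=
  unfold swapn;
  repeat match goal with
         | |- context [Nat.eqb ?x ?y] =>
             is_var x; is_var y; destruct (Nat.eqb_spec x y); subst
         end;
  congruence.

Lemma swapn_involutive a b x : swapn a b (swapn a b x) = x.
Proof. swapn_cases. Qed.

Lemma swapn_id a x : swapn a a x = x.
Proof. swapn_cases. Qed.

Lemma swapn_l a b : swapn a b a = b.
Proof. swapn_cases. Qed.

Lemma swapn_fresh a b x : x <> a -> x <> b -> swapn a b x = x.
Proof. swapn_cases. Qed.

Lemma swapn_conj d c a b x :
  swapn d c (swapn a b x) = swapn (swapn d c a) (swapn d c b) (swapn d c x).
Proof. swapn_cases. Qed.

Lemma swapn_as_conj a a' c x : a <> a' -> c <> a -> c <> a' ->
  swapn a a' x = swapn a c (swapn a' c (swapn a c x)).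
Proof. swapn_cases. Qed.

Lemma swapn_swapn_fresh a b c x : x <> b -> x <> c ->
  swapn b c (swapn a b x) = swapn a c x.
Proof. swapn_cases. Qed.

Lemma swapl_involutive a b l : swapl a b (swapl a b l) = l.
Proof. destruct l; simpl; rewrite swapn_involutive; reflexivity. Qed.

Lemma swapl_fresh a b l : lname l <> a -> lname l <> b -> swapl a b l = l.
Proof. destruct l; simpl; intros; rewrite swapn_fresh; auto. Qed.

Lemma swapw_involutive a b v : swapw a b (swapw a b v) = v.
Proof.
  unfold swapw; rewrite map_map; rewrite <- (map_id v) at 2.
  apply map_ext, swapl_involutive.
Qed.

Lemma swapw_id a v : swapw a a v = v.
Proof.
  unfold swapw; rewrite <- (map_id v) at 2.
  apply map_ext; intros []; simpl; rewrite swapn_id; reflexivity.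
Qed.

Lemma In_names_swapw d c x v :
  In (swapn d c x) (names (swapw d c v)) <-> In x (names v).
Proof.
  unfold names, swapw; rewrite map_map, in_map_iff, in_map_iff; split.
  - intros [l [Hl Hin]]; exists l; split; [|exact Hin].
    apply (f_equal (swapn d c)) in Hl.
    destruct l; simpl in Hl; rewrite !swapn_involutive in Hl; exact Hl.
  - intros [l [Hl Hin]]; exists l; split; [destruct l; simpl in *; congruence | exact Hin].
Qed.

Lemma swapw_swapw_fresh a b c v : ~ In b (names v) -> ~ In c (names v) ->
  swapw b c (swapw a b v) = swapw a c v.
Proof.
  intros Hb Hc; unfold swapw; rewrite map_map; apply map_ext_in; intros l Hl.
  assert (Hn : In (lname l) (names v)) by (apply in_map; exact Hl).
  destruct l; simpl in *; rewrite swapn_swapn_fresh; congruence.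
Qed.

Lemma exists_fresh (L : list name) : exists a, ~ In a L.
Proof.
  exists (S (list_max L)); intro Hin.
  pose proof (proj1 (list_max_le L _) (le_n _)) as Hmax.
  rewrite Forall_forall in Hmax; apply Hmax in Hin; lia.
Qed.

Lemma alpha_app x v w : alpha v w -> alpha (x ++ v) (x ++ w).
Proof.
  induction 1.
  - apply alpha_refl.
  - apply alpha_sym; assumption.
  - eapply alpha_trans; eassumption.
  - rewrite !app_assoc; apply alpha_rule; assumption.
Qed.

Lemma alpha_swapw d c u v : alpha u v -> alpha (swapw d c u) (swapw d c v).
Proof.
  induction 1 as [| | |x a v b w Hab].
  - apply alpha_refl.
  - apply alpha_sym; assumption.
  - eapply alpha_trans; eassumption.
  - unfold swapw; rewrite !map_app; simpl; apply alpha_rule.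
    destruct Hab as [[-> ->] | [Hfresh <-]]; [left; auto | right; split].
    + intro Hin; apply Hfresh, (In_names_swapw d c), Hin.
    + unfold swapw; rewrite !map_map; apply map_ext; intros []; simpl;
        rewrite <- swapn_conj; reflexivity.
Qed.

(* The case [Bd] is the cofinite-quantification form of <a>[v] = <b>[w]. *)
Definition alpha_head (u u' : word) : Prop :=
  match u, u' with
  | [], [] => True
  | Fr c :: v, Fr c' :: v' => c = c' /\ alpha v v'
  | Bd a :: v, Bd b :: w =>
      exists L, forall c, ~ In c L -> alpha (swapw a c v) (swapw b c w)
  | _, _ => False
  end.

Lemma alpha_head_refl u : alpha_head u u.
Proof.
  destruct u as [|[] v]; simpl; [exact I | split; [reflexivity | apply alpha_refl] |].
  exists []; intros; apply alpha_refl.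
Qed.

Lemma alpha_head_sym u v : alpha_head u v -> alpha_head v u.
Proof.
  destruct u as [|[] u], v as [|[] v]; simpl; try tauto.
  - intros [-> H]; split; [reflexivity | apply alpha_sym, H].
  - intros [L H]; exists L; intros; apply alpha_sym, H; assumption.
Qed.

Lemma alpha_head_trans u v w : alpha_head u v -> alpha_head v w -> alpha_head u w.
Proof.
  destruct u as [|[] u], v as [|[] v], w as [|[] w]; simpl; try tauto.
  - intros [-> H1] [-> H2]; split; [reflexivity | eapply alpha_trans; eassumption].
  - intros [L1 H1] [L2 H2]; exists (L1 ++ L2); intros c Hc; rewrite in_app_iff in Hc.
    eapply alpha_trans; [apply H1 | apply H2]; tauto.
Qed.

Lemma alpha_head_rule x a v b w : abs_eq_word a v b w ->
  alpha_head (x ++ Bd a :: v) (x ++ Bd b :: w).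
Proof.
  intro Hab; destruct x as [|[] x]; simpl.
  - destruct Hab as [[-> ->] | [Hfresh <-]]; [exists []; intros; apply alpha_refl |].
    exists (b :: names v); intros c Hc; simpl in Hc.
    rewrite swapw_swapw_fresh; [apply alpha_refl | exact Hfresh | tauto].
  - split; [reflexivity | apply alpha_rule, Hab].
  - exists []; intros; apply alpha_swapw, alpha_rule, Hab.
Qed.

Lemma alpha_alpha_head u v : alpha u v -> alpha_head u v.
Proof.
  induction 1.
  - apply alpha_head_refl.
  - apply alpha_head_sym; assumption.
  - eapply alpha_head_trans; eassumption.
  - apply alpha_head_rule; assumption.
Qed.

Lemma alpha_cons_inv l v v' : alpha (l :: v) (l :: v') -> alpha v v'.
Proof.
  intro H; apply alpha_alpha_head in H; destruct l as [c|a]; simpl in H; [tauto |].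
  destruct H as [L H]; destruct (exists_fresh L) as [c Hc].
  rewrite <- (swapw_involutive a c v), <- (swapw_involutive a c v').
  apply alpha_swapw, H, Hc.
Qed.

Lemma saturated_iff U w v : saturated U -> alpha w v -> (U w <-> U v).
Proof. intros HU Hwv; split; apply HU; [| apply alpha_sym]; exact Hwv. Qed.

Lemma saturated_exists_alpha U u : saturated U ->
  (exists w, U w /\ alpha u w) = U u.
Proof.
  intro HU; apply propositional_extensionality; split.
  - intros [w [Hw Huw]]; apply (saturated_iff U u w HU Huw), Hw.
  - intro Hu; exists u; split; [exact Hu | apply alpha_refl].
Qed.

Definition deriv (l : letter) (U : cset) : cset := fun v => U (l :: v).

Lemma c_at_tau_at a U : saturated U -> c_at a U = tau_at a U.
Proof.
  intro HU; unfold c_at, tau_at; rewrite saturated_exists_alpha by exact HU.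
  do 3 f_equal.
  - apply functional_extensionality; intro c; apply functional_extensionality; intro v.
    apply saturated_exists_alpha, HU.
  - apply functional_extensionality; intro v; apply saturated_exists_alpha, HU.
Qed.

Lemma swapset_deriv a b l U :
  swapset a b (deriv l U) = deriv (swapl a b l) (swapset a b U).
Proof. unfold swapset, deriv, swapw; simpl; rewrite swapl_involutive; reflexivity. Qed.

Lemma supports_set_deriv N l U :
  supports_set N U -> supports_set (lname l :: N) (deriv l U).
Proof.
  intros HN x y Hx Hy; simpl in Hx, Hy.
  rewrite swapset_deriv, swapl_fresh, HN by tauto; reflexivity.
Qed.

Lemma deriv_Pufs l U : inPufs U -> inPufs (deriv l U).
Proof.
  intros [HU [N HN]]; split.
  - intros v v' Hvv'; apply HU, (alpha_app [l]), Hvv'.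
  - exists (lname l :: N); intros v Hv x y Hx Hy; simpl in Hx, Hy.
    apply (alpha_cons_inv l).
    rewrite <- (swapl_fresh x y l) at 1 by tauto.
    apply (HN _ Hv); tauto.
Qed.

Lemma Pufs_fs U : inPufs U -> fs U.
Proof.
  intros [HU [N HN]]; exists N; intros a b Ha Hb.
  apply functional_extensionality; intro w; apply propositional_extensionality.
  unfold swapset; split; intro Hw.
  - pose proof (HN _ Hw a b Ha Hb) as Hsw; rewrite swapw_involutive in Hsw.
    apply (saturated_iff U _ _ HU Hsw), Hw.
  - apply (saturated_iff U _ _ HU (HN _ Hw a b Ha Hb)), Hw.
Qed.

Lemma Pufs_Pfs U : inPufs U -> inPfs U.
Proof. intro HU; split; [apply HU | apply Pufs_fs, HU]. Qed.

Lemma exists_fresh_common S T L : fs S -> fs T ->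
  exists a, fresh_set a S /\ fresh_set a T /\ ~ In a L.
Proof.
  intros [N1 H1] [N2 H2]; destruct (exists_fresh (N1 ++ N2 ++ L)) as [a Ha].
  rewrite !in_app_iff in Ha; exists a.
  split; [exists N1 | split; [exists N2 |]]; tauto.
Qed.

(* The transposition (a a') factors as (a c)(a' c)(a c) through a name c fresh
   for both supports. *)
Lemma swapset_fresh a a' U : fresh_set a U -> fresh_set a' U -> swapset a a' U = U.
Proof.
  intros [N [HN Ha]] [N' [HN' Ha']].
  destruct (Nat.eq_dec a a') as [<- | Hne].
  { apply functional_extensionality; intro w; unfold swapset; rewrite swapw_id; reflexivity. }
  destruct (exists_fresh (a :: a' :: N ++ N')) as [c Hc]; simpl in Hc.
  rewrite in_app_iff in Hc.
  assert (Hconj : swapset a a' U = swapset a c (swapset a' c (swapset a c U))).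
  { apply functional_extensionality; intro w; unfold swapset, swapw; rewrite !map_map.
    f_equal; apply map_ext; intros []; simpl; rewrite <- swapn_as_conj by (intros ->; tauto);
      reflexivity. }
  rewrite Hconj, (HN a c), (HN' a' c), (HN a c); tauto.
Qed.

Lemma tau_at_fresh_Geq a a' U : fresh_set a U -> fresh_set a' U ->
  Geq (tau_at a U) (tau_at a' U).
Proof.
  intros Ha Ha'; simpl; split; [reflexivity | split; [reflexivity |]].
  change (abs_eq a (deriv (Bd a) U) a' (deriv (Bd a') U)).
  destruct (Nat.eq_dec a a') as [<- | Hne]; [left; auto | right; split].
  - destruct Ha' as [N [HN Ha']]; exists (a :: N).
    split; [apply (supports_set_deriv N (Bd a)), HN | simpl; tauto].
  - rewrite swapset_deriv; simpl; rewrite swapn_l, swapset_fresh by assumption.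
    reflexivity.
Qed.

Lemma Gmap_id x : Gmap (fun U => U) x = x.
Proof. destruct x as [[b f] [a X]]; reflexivity. Qed.

Lemma id_is_hom : is_hom (fun U => U).
Proof.
  split; [exact Pufs_Pfs | split; [reflexivity |]].
  intros U a a' HU Ha Ha'.
  rewrite Gmap_id, c_at_tau_at by apply HU.
  apply tau_at_fresh_Geq; assumption.
Qed.

Lemma abs_eq_same_name a X Y : abs_eq a X a Y -> X = Y.
Proof.
  intros [[_ E] | [_ E]]; [exact E |].
  rewrite <- E; apply functional_extensionality; intro w.
  unfold swapset; rewrite swapw_id; reflexivity.
Qed.

Section Uniqueness.

Variable e : cset -> cset.
Hypothesis e_hom : is_hom e.

Lemma hom_Pfs U : inPufs U -> inPfs (e U).
Proof. apply (proj1 e_hom). Qed.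

Lemma hom_nil_deriv U a : inPufs U -> fresh_set a U -> fresh_set a (e U) ->
  U [] = e U [] /\
  (forall c, e (deriv (Fr c) U) = deriv (Fr c) (e U)) /\
  e (deriv (Bd a) U) = deriv (Bd a) (e U).
Proof.
  intros HU Ha Hea.
  pose proof (proj2 (proj2 e_hom) U a a HU Ha Hea) as Htau.
  rewrite c_at_tau_at in Htau by apply HU.
  destruct Htau as [Hnil [HFr HBd]].
  split; [exact Hnil | split; [exact HFr | exact (abs_eq_same_name _ _ _ HBd)]].
Qed.

Lemma hom_iff_on_length n : forall U w, length w = n -> inPufs U -> (e U w <-> U w).
Proof.
  induction n as [|n IH]; intros U w Hlen HU;
    destruct (exists_fresh_common _ _ (names w) (Pufs_fs U HU) (proj2 (hom_Pfs U HU)))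
      as [a [HaU [HaeU Haw]]];
    destruct (hom_nil_deriv U a HU HaU HaeU) as [Hnil [HFr HBd]].
  - destruct w; [rewrite Hnil; reflexivity | discriminate].
  - destruct w as [|[c|b] v]; [discriminate | |]; simpl in Hlen; injection Hlen as Hlen.
    + change (deriv (Fr c) (e U) v <-> deriv (Fr c) U v).
      rewrite <- HFr; apply IH; [exact Hlen | apply deriv_Pufs, HU].
    + assert (Hrename : alpha (Bd b :: v) (Bd a :: swapw b a v)).
      { apply (alpha_rule [] b v a (swapw b a v)); right; split; [|reflexivity].
        unfold fresh_word; simpl in Haw; tauto. }
      rewrite (saturated_iff _ _ _ (proj1 (hom_Pfs U HU)) Hrename),
        (saturated_iff _ _ _ (proj1 HU) Hrename).
      change (deriv (Bd a) (e U) (swapw b a v) <-> deriv (Bd a) U (swapw b a v)).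
      rewrite <- HBd; apply IH; [unfold swapw; rewrite length_map; exact Hlen |].
      apply deriv_Pufs, HU.
Qed.

Lemma hom_eq_id U : inPufs U -> e U = U.
Proof.
  intro HU; apply functional_extensionality; intro w.
  apply propositional_extensionality, (hom_iff_on_length (length w)); auto.
Qed.

End Uniqueness.

Theorem lemma4p21 :
  is_hom (fun U => U) /\
  (forall e : cset -> cset, is_hom e -> forall U, inPufs U -> e U = U).
Proof.
  split; [exact id_is_hom |].
  intros e He; apply hom_eq_id, He.
Qed.
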